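(* Let $\Gamma$ be a connected, undirected graph without loops on $n$ nodes with Laplacian $\mathbf L=\mathbf K-\mathbf A$, and let $\phi_1,\dots,\phi_n$ be an orthonormal basis of eigenvectors of $\mathbf L$ with $\mathbf L\phi_i=\mu_i\phi_i$. Let $$\mathbf G=\begin{bmatrix}\mathbf 0&\mathbf I\\-\mathbf I&-\mathbf L\end{bmatrix},\qquad \mathbf U=\mathbf G(\mathbf G^T\mathbf G)^{-1/2},$$ and set $\lambda_i^{P+}=\tfrac12\big[\sqrt{\mu_i^2+4}+\mu_i\big]$. Then $$\mathbf U=\begin{bmatrix}\mathcal A&\mathcal B\\-\mathcal B&\mathcal A\end{bmatrix},\qquad \mathcal A=\sum_{i=1}^n\frac{1-(\lambda_i^{P+})^2}{1+(\lambda_i^{P+})^2}\phi_i\phi_i^T,\quad \mathcal B=\sum_{i=1}^n\frac{2\lambda_i^{P+}}{1+(\lambda_i^{P+})^2}\phi_i\phi_i^T.$$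
   Context: $\mathbf A$ is the adjacency matrix, $\mathbf K$ the diagonal degree matrix, $\mathbf I,\mathbf 0$ the $n\times n$ identity and zero matrices; $(\mathbf G^T\mathbf G)^{-1/2}$ is the inverse of the positive definite square root of $\mathbf G^T\mathbf G$, so $\mathbf U$ is the orthogonal factor in the polar decomposition of $\mathbf G$. *)

From HB Require Import structures.
From mathcomp Require Import all_boot all_order all_algebra.
Set Implicit Arguments. Unset Strict Implicit. Unset Printing Implicit Defensive.
Import Order.TTheory GRing.Theory Num.Theory.
Local Open Scope ring_scope.

Definition simple_graph (n : nat) (e : rel 'I_n) : Prop :=
  symmetric e /\ irreflexive e.

Definition graph_connected (n : nat) (e : rel 'I_n) : Prop :=
  forall i j : 'I_n, connect e i j.

Definition adjmx (R : nzRingType) (n : nat) (e : rel 'I_n) : 'M[R]_n :=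
  \matrix_(i, j) (e i j)%:R.

Definition degmx (R : nzRingType) (n : nat) (e : rel 'I_n) : 'M[R]_n :=
  diag_mx (\row_i (\sum_j adjmx R e i j)).

Definition laplacian (R : nzRingType) (n : nat) (e : rel 'I_n) : 'M[R]_n :=
  degmx R e - adjmx R e.

Definition pos_def (R : numDomainType) (m : nat) (S : 'M[R]_m) : Prop :=
  S^T = S /\ forall v : 'cV[R]_m, v != 0 -> 0 < (v^T *m S *m v) 0 0.

Definition is_pd_sqrt (R : numDomainType) (m : nat) (M S : 'M[R]_m) : Prop :=
  pos_def S /\ S *m S = M.

Definition Gmx (R : nzRingType) (n : nat) (L : 'M[R]_n) : 'M[R]_(n + n) :=
  block_mx 0 1%:M (- 1%:M) (- L).

Definition lamPplus (R : rcfType) (mu : R) : R :=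
  (Num.sqrt (mu ^+ 2 + 4) + mu) / 2.

(* If G = U P with U orthogonal and P symmetric positive semidefinite, then
   G^T G = P^2, so P is the positive definite square root of G^T G (such a root
   is unique) and U = G (G^T G)^(-1/2).  In the orthonormal eigenbasis of L, G
   splits into the 2x2 blocks [[0, 1], [-1, -mu]] and the candidate U into the
   rotations [[c, s], [-s, c]].  Then U^T G has the blocks
   [[s, -c], [-c, s - c mu]], which are symmetric because 2 c + s mu = 0 and
   positive semidefinite because s > 0 and s (s - c mu) - c^2 = c^2 + s^2 = 1. *)

From mathcomp Require Import all_boot all_order all_algebra.
From mathcomp Require Import ring lra.
Import Order.TTheory GRing.Theory Num.Theory.
Local Open Scope ring_scope.

Section SpectralCalculus.
Context {R : comUnitRingType} {n : nat} (Phi : 'M[R]_n).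

Definition spectral (d : 'I_n -> R) : 'M[R]_n :=
  Phi *m diag_mx (\row_i d i) *m Phi^T.

Lemma eq_spectral (d1 d2 : 'I_n -> R) : d1 =1 d2 -> spectral d1 = spectral d2.
Proof.
move=> eq_d; rewrite /spectral; congr (_ *m diag_mx _ *m _).
by apply/rowP=> i; rewrite !mxE.
Qed.

Lemma spectralD (d1 d2 : 'I_n -> R) :
  spectral d1 + spectral d2 = spectral (fun i => d1 i + d2 i).
Proof.
rewrite /spectral -mulmxDl -mulmxDr -raddfD /=.
by congr (_ *m diag_mx _ *m _); apply/rowP=> i; rewrite !mxE.
Qed.

Lemma spectralN (d : 'I_n -> R) : - spectral d = spectral (fun i => - d i).
Proof.
rewrite /spectral -mulNmx -mulmxN -raddfN /=.
by congr (_ *m diag_mx _ *m _); apply/rowP=> i; rewrite !mxE.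
Qed.

Lemma spectral0 : spectral (fun=> 0) = 0.
Proof.
rewrite /spectral (_ : \row__ 0 = 0) ?raddf0 ?mulmx0 ?mul0mx //.
by apply/rowP=> i; rewrite !mxE.
Qed.

Lemma trmx_spectral (d : 'I_n -> R) : (spectral d)^T = spectral d.
Proof. by rewrite /spectral !trmx_mul trmxK tr_diag_mx mulmxA. Qed.

Lemma sum_outer_spectral (d : 'I_n -> R) :
  \sum_(i < n) d i *: (col i Phi *m (col i Phi)^T) = spectral d.
Proof.
apply/matrixP=> i j; rewrite summxE /spectral mul_mx_diag !mxE.
by apply: eq_bigr => k _; rewrite !mxE big_ord1 !mxE mulrAC mulrC.
Qed.

Lemma spectral_quad (d : 'I_n -> R) (x y : 'cV[R]_n) :
  (x^T *m spectral d *m y) 0 0 =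
  \sum_i (Phi^T *m x) i 0 * d i * (Phi^T *m y) i 0.
Proof.
rewrite /spectral !mulmxA -(mulmxA _ _ y) -[x^T *m Phi]trmxK trmx_mul trmxK.
by rewrite !mxE; apply: eq_bigr => k _; rewrite mul_mx_diag !mxE.
Qed.

Hypothesis Phi_orth : Phi^T *m Phi = 1%:M.

Lemma spectralM (d1 d2 : 'I_n -> R) :
  spectral d1 *m spectral d2 = spectral (fun i => d1 i * d2 i).
Proof.
rewrite /spectral !mulmxA -[_ *m Phi^T *m Phi]mulmxA Phi_orth mulmx1 -(mulmxA Phi).
congr (_ *m _ *m _); apply/matrixP=> i j.
by rewrite mul_diag_mx !mxE; case: eqP; rewrite ?mulr1n ?mulr0n ?mulr0.
Qed.

Lemma spectral1 : spectral (fun=> 1) = 1%:M.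
Proof.
rewrite /spectral (_ : \row__ 1 = const_mx 1); last by apply/rowP=> i; rewrite !mxE.
by rewrite diag_const_mx mulmx1 (mulmx1C Phi_orth).
Qed.

Lemma spectral_eigen (M : 'M[R]_n) (mu : 'I_n -> R) :
  (forall i, M *m col i Phi = mu i *: col i Phi) -> M = spectral mu.
Proof.
move=> eigM; have MPhi : M *m Phi = Phi *m diag_mx (\row_i mu i).
  apply/matrixP=> k i; rewrite mul_mx_diag mxE mulrC.
  have /matrixP/(_ k 0) := eigM i; rewrite !mxE => <-.
  by apply: eq_bigr => j _; rewrite !mxE.
by rewrite /spectral -MPhi -mulmxA (mulmx1C Phi_orth) mulmx1.
Qed.

End SpectralCalculus.

Section PositiveDefinite.
Context {R : numFieldType} {m : nat}.

Lemma pos_def_quad_ge0 (S : 'M[R]_m) (v : 'cV[R]_m) :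
  pos_def S -> 0 <= (v^T *m S *m v) 0 0.
Proof.
move=> [_ S_pd]; have [->|/S_pd/ltW //] := eqVneq v 0.
by rewrite mulmx0 mxE.
Qed.

Lemma mxtrace_quad (S X : 'M[R]_m) :
  \tr (X^T *m S *m X) = \sum_j ((col j X)^T *m S *m col j X) 0 0.
Proof.
apply: eq_bigr => j _; rewrite tr_col !mxE.
apply: eq_bigr => k _; rewrite !mxE; congr (_ * _).
by apply: eq_bigr => l _; rewrite !mxE.
Qed.

Lemma pos_def_unitmx (S : 'M[R]_m) : pos_def S -> S \in unitmx.
Proof.
move=> [_ S_pd]; rewrite -row_free_unit; apply: inj_row_free => v vS0.
apply/eqP; apply: contraT; rewrite -trmx_eq0 => /S_pd.
by rewrite trmxK vS0 mul0mx mxE ltxx.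
Qed.

(* With X := S - P, the identity S X + X P = S^2 - P^2 = 0 makes
   tr(X S X) + tr(X P X) vanish; both traces are nonnegative, and the first
   is positive unless X = 0. *)
Lemma pos_def_sqrt_uniq (S P : 'M[R]_m) :
  pos_def S -> P^T = P -> (forall v : 'cV[R]_m, 0 <= (v^T *m P *m v) 0 0) ->
  S *m S = P *m P -> S = P.
Proof.
move=> S_pd PT P_psd SSPP; have [ST S_pos] := S_pd.
set X := S - P; have XT : X^T = X by rewrite /X linearB /= ST PT.
have trS_ge0 : 0 <= \tr (X^T *m S *m X).
  by rewrite mxtrace_quad; apply: sumr_ge0 => j _; apply: pos_def_quad_ge0.
have trP_ge0 : 0 <= \tr (X^T *m P *m X).
  by rewrite mxtrace_quad; apply: sumr_ge0.
have trSP : \tr (X^T *m S *m X) + \tr (X^T *m P *m X) = 0.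
  have SX_XP : S *m X + X *m P = 0.
    by rewrite mulmxBr mulmxBl SSPP addrA subrK subrr.
  rewrite XT -(mulmxA X S X) (mxtrace_mulC (X *m P) X) -mxtraceD -mulmxDr.
  by rewrite SX_XP mulmx0 mxtrace0.
move/eqP: trSP; rewrite paddr_eq0 // => /andP[/eqP].
rewrite mxtrace_quad => /psumr_eq0P trS0 _.
apply/eqP; rewrite -subr_eq0 -/X; apply/eqP/matrixP => i j.
have /matrixP/(_ i 0) : col j X = 0.
  apply/eqP/contraT => /S_pos; rewrite trS0 ?ltxx // => k _.
  exact: pos_def_quad_ge0.
by rewrite !mxE.
Qed.

Lemma polar_factorE (G U S : 'M[R]_m) :
  U *m U^T = 1%:M -> (U^T *m G)^T = U^T *m G ->
  (forall v : 'cV[R]_m, 0 <= (v^T *m (U^T *m G) *m v) 0 0) ->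
  is_pd_sqrt (G^T *m G) S -> G *m invmx S = U.
Proof.
move=> U_orth PT P_psd [S_pd SS]; set P := U^T *m G in PT P_psd.
have GUP : G = U *m P by rewrite mulmxA U_orth mul1mx.
have SP : S = P.
  apply: pos_def_sqrt_uniq => //; rewrite SS {1 2}GUP trmx_mul PT.
  by rewrite -mulmxA (mulmxA _ U) (mulmx1C U_orth) mul1mx.
by rewrite GUP -SP mulmxK //; apply: pos_def_unitmx.
Qed.

End PositiveDefinite.

Section SpectralBlocks.
Context {R : realFieldType} {n : nat} (Phi : 'M[R]_n).

Lemma spectral_block_psd (p q r : 'I_n -> R) :
  (forall i, 0 < p i) -> (forall i, q i ^+ 2 <= p i * r i) ->
  forall v : 'cV[R]_(n + n),
  0 <= (v^T *m block_mx (spectral Phi p) (spectral Phi q)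
                        (spectral Phi q) (spectral Phi r) *m v) 0 0.
Proof.
move=> p_gt0 qpr v; rewrite -(vsubmxK v) tr_col_mx mul_row_block mul_row_col.
have entryD (A B : 'M[R]_1) : (A + B) 0 0 = A 0 0 + B 0 0 by rewrite mxE.
rewrite !mulmxDl !entryD !spectral_quad -!big_split /=.
apply: sumr_ge0 => i _.
set x := (Phi^T *m usubmx v) i 0; set y := (Phi^T *m dsubmx v) i 0.
rewrite -(pmulr_rge0 _ (p_gt0 i)).
have -> : p i * (x * p i * x + y * q i * x + (x * q i * y + y * r i * y))
    = (p i * x + q i * y) ^+ 2 + (p i * r i - q i ^+ 2) * y ^+ 2 by ring.
by rewrite addr_ge0 ?sqr_ge0 // mulr_ge0 ?sqr_ge0 // subr_ge0.
Qed.

Hypothesis Phi_orth : Phi^T *m Phi = 1%:M.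
Variables (mu a b : 'I_n -> R).
Hypothesis ab_unit : forall i, a i ^+ 2 + b i ^+ 2 = 1.
Hypothesis ab_mu : forall i, 2 * a i + b i * mu i = 0.
Hypothesis b_gt0 : forall i, 0 < b i.

Let U := block_mx (spectral Phi a) (spectral Phi b)
                  (- spectral Phi b) (spectral Phi a).

Lemma trmx_rotation :
  U^T = block_mx (spectral Phi a) (spectral Phi (fun i => - b i))
                 (spectral Phi b) (spectral Phi a).
Proof. by rewrite /U tr_block_mx !trmx_spectral linearN /= trmx_spectral spectralN. Qed.

Lemma rotation_orthogonal : U *m U^T = 1%:M.
Proof.
rewrite trmx_rotation /U mulmx_block !mulNmx !spectralM // !spectralN !spectralD //.
rewrite (scalar_mx_block n n 1) -(spectral1 _ Phi_orth) -(spectral0 Phi).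
by congr block_mx; apply: eq_spectral => i; rewrite -?(ab_unit i); ring.
Qed.

Lemma rotation_polar_part :
  U^T *m Gmx (spectral Phi mu) =
  block_mx (spectral Phi b) (spectral Phi (fun i => - a i))
           (spectral Phi (fun i => - a i))
           (spectral Phi (fun i => b i - a i * mu i)).
Proof.
rewrite trmx_rotation /Gmx mulmx_block !mulmx0 !mulmx1 !mulmxN !add0r !spectralM //.
rewrite !spectralN !spectralD !mulmx1 !spectralN.
by congr block_mx; apply: eq_spectral => i /=; have := ab_mu i; lra.
Qed.

Lemma Gmx_polar_factor (S : 'M[R]_(n + n)) :
  is_pd_sqrt ((Gmx (spectral Phi mu))^T *m Gmx (spectral Phi mu)) S ->
  Gmx (spectral Phi mu) *m invmx S = U.
Proof.
apply: polar_factorE; first exact: rotation_orthogonal.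
  by rewrite rotation_polar_part tr_block_mx !trmx_spectral.
rewrite rotation_polar_part; apply: spectral_block_psd => // i.
by have := ab_unit i; have := ab_mu i; nra.
Qed.

End SpectralBlocks.

Section PolarCoefficients.
Context {R : rcfType}.

(* [(polar_cos mu, polar_sin mu) = (cos t, sin t)] where [tan (t/2) = lamPplus mu]. *)
Definition polar_cos (mu : R) : R :=
  (1 - lamPplus mu ^+ 2) / (1 + lamPplus mu ^+ 2).
Definition polar_sin (mu : R) : R :=
  (2 * lamPplus mu) / (1 + lamPplus mu ^+ 2).

Lemma lamPplus_gt0 (mu : R) : 0 < lamPplus mu.
Proof.
rewrite /lamPplus; set s := Num.sqrt _.
have s_ge0 : 0 <= s by apply: sqrtr_ge0.
have s2 : s ^+ 2 = mu ^+ 2 + 4 by rewrite sqr_sqrtr // addr_ge0 ?sqr_ge0.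
nra.
Qed.

Lemma lamPplus_root (mu : R) : lamPplus mu ^+ 2 = mu * lamPplus mu + 1.
Proof.
rewrite /lamPplus; set s := Num.sqrt _.
have s2 : s ^+ 2 = mu ^+ 2 + 4 by rewrite sqr_sqrtr // addr_ge0 ?sqr_ge0.
nra.
Qed.

Lemma polar_cos_sin (mu : R) : polar_cos mu ^+ 2 + polar_sin mu ^+ 2 = 1.
Proof.
rewrite /polar_cos /polar_sin; set l := lamPplus mu.
by field; rewrite gt_eqF // (ltr_wpDr (sqr_ge0 _) ltr01).
Qed.

Lemma polar_cos_mu (mu : R) : 2 * polar_cos mu + polar_sin mu * mu = 0.
Proof.
rewrite /polar_cos /polar_sin; have := lamPplus_root mu; set l := lamPplus mu => l_root.
have den_gt0 : 0 < 1 + l ^+ 2 := ltr_wpDr (sqr_ge0 _) ltr01.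
by rewrite l_root; field; rewrite -l_root gt_eqF.
Qed.

Lemma polar_sin_gt0 (mu : R) : 0 < polar_sin mu.
Proof.
apply: divr_gt0; first exact: mulr_gt0 (lamPplus_gt0 mu).
exact: ltr_wpDr (sqr_ge0 _) ltr01.
Qed.

End PolarCoefficients.

Theorem proposition6 (R : rcfType) (n : nat) (e : rel 'I_n)
  (Phi : 'M[R]_n) (mu : 'I_n -> R) (S : 'M[R]_(n + n)) :
  simple_graph e -> graph_connected e ->
  Phi^T *m Phi = 1%:M ->
  (forall i : 'I_n, laplacian R e *m col i Phi = mu i *: col i Phi) ->
  is_pd_sqrt ((Gmx (laplacian R e))^T *m Gmx (laplacian R e)) S ->
  let calA := \sum_(i < n)
      ((1 - lamPplus (mu i) ^+ 2) / (1 + lamPplus (mu i) ^+ 2))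
        *: (col i Phi *m (col i Phi)^T) in
  let calB := \sum_(i < n)
      ((2 * lamPplus (mu i)) / (1 + lamPplus (mu i) ^+ 2))
        *: (col i Phi *m (col i Phi)^T) in
  Gmx (laplacian R e) *m invmx S = block_mx calA calB (- calB) calA.
Proof.
move=> _ _ Phi_orth eigL + calA calB.
have -> : laplacian R e = spectral Phi mu by apply: spectral_eigen.
rewrite /calA /calB !sum_outer_spectral.
apply: Gmx_polar_factor => // i.
- exact: polar_cos_sin.
- exact: polar_cos_mu.
- exact: polar_sin_gt0.
Qed.
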